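(* Let $\mathcal{P}=[0,1]^n\cap K$ be a polytope, where $K$ is an affine subspace of $\mathbb{R}^n$. Let $v$ be a vertex of $\mathcal{P}$ and let $F$ be a facet of $\mathcal{P}$ that does not contain $v$. Then there exists a coordinate $i\in[n]$ such that either $v_i>0$ and $x_i=0$ for all $x\in F$, or $v_i<1$ and $x_i=1$ for all $x\in F$. *)

From mathcomp Require Import all_boot all_order all_algebra.
Set Implicit Arguments. Unset Strict Implicit. Unset Printing Implicit Defensive.
Import Order.TTheory GRing.Theory Num.Theory.
Local Open Scope ring_scope.

Section Defs.
Variables (R : realFieldType) (n : nat).
Notation pt := 'rV[R]_n.

Definition dot (c x : pt) : R := \sum_(i < n) c ord0 i * x ord0 i.

Definition is_affine (K : pt -> Prop) : Prop :=
  forall x y : pt, K x -> K y -> forall t : R, K ((1 - t) *: x + t *: y).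

Definition cube_cap (K : pt -> Prop) (x : pt) : Prop :=
  (forall i : 'I_n, 0 <= x ord0 i <= 1) /\ K x.

(* F is a face of P: intersection of P with a valid supporting hyperplane
   (c = 0, d = 0 gives P itself) *)
Definition is_face (P F : pt -> Prop) : Prop :=
  exists (c : pt) (d : R), (forall x, P x -> dot c x <= d) /\
    (forall x, F x <-> (P x /\ dot c x = d)).

Definition affindep (d : nat) (p : 'I_d.+1 -> pt) : bool :=
  row_free (\matrix_(i < d) (p (lift ord0 i) - p ord0)).

(* S has (affine) dimension d: contains d+1 but not d+2 affinely
   independent points (in particular S is nonempty) *)
Definition has_dim (S : pt -> Prop) (d : nat) : Prop :=
  (exists p : 'I_d.+1 -> pt, (forall i, S (p i)) /\ affindep p) /\
  (forall p : 'I_d.+2 -> pt, (forall i, S (p i)) -> ~~ affindep p).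

Definition is_vertex (P : pt -> Prop) (v : pt) : Prop :=
  is_face P (fun x => x = v).

Definition is_facet (P F : pt -> Prop) : Prop :=
  is_face P F /\ exists d : nat, has_dim P d.+1 /\ has_dim F d.
End Defs.

From mathcomp Require Import all_boot all_order all_algebra.
From Stdlib Require Import Classical_Prop.
From mathcomp Require Import ring lra.
Set Implicit Arguments. Unset Strict Implicit.
Import Order.TTheory GRing.Theory Num.Theory.
Local Open Scope ring_scope.

(* Only two facts about [v] and [F] matter: [v] is a point of [P] outside [F],
   and [F] is a nonempty face of [P], cut out by [c x <= d].  If the claim
   failed, then for every coordinate [i] and every bound [e] in {0,1} with
   [v_i <> e], some point of [F] has [x_i <> e].  As [F] is convex and [e] is
   an extreme point of [0,1], averaging these finitely many points gives one
   [y] in [F] with [y_i <> e] whenever [v_i <> e].  The segment from [v] to [y]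
   can then be prolonged a little beyond [y] inside the cube, and inside [K]
   since [K] is affine; but [c v < d = c y], so the prolonged point [z]
   satisfies [c z > d], although [z] lies in [P]. *)

Section UnitInterval.
Variable R : realFieldType.
Implicit Types a b s t x y : R.

Lemma conv_in01 x y t : 0 <= x <= 1 -> 0 <= y <= 1 -> 0 <= t <= 1 ->
  0 <= (1 - t) * x + t * y <= 1.
Proof. by move=> /andP[? ?] /andP[? ?] /andP[? ?]; apply/andP; split; nra. Qed.

(* For [e : bool], [e%:R] ranges over the two endpoints 0 and 1. *)
Lemma conv_eq_bound x y t (e : bool) :
  0 <= x <= 1 -> 0 <= y <= 1 -> 0 < t < 1 ->
  (1 - t) * x + t * y = e%:R -> x = e%:R /\ y = e%:R.
Proof. by move=> /andP[? ?] /andP[? ?] /andP[? ?]; case: e => /= ?; split; nra. Qed.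

Lemma extend_in01 a b : 0 <= a <= 1 -> 0 <= b <= 1 ->
  (forall e : bool, a != e%:R -> b != e%:R) ->
  exists2 t, 0 < t & 0 <= b + t * (b - a) <= 1.
Proof.
move=> /andP[a0 a1] /andP[b0 b1] hab.
have:= hab false; have:= hab true => /= hb1 hb0.
have [-> | [b_gt0 b_lt1]] : a = b \/ 0 < b /\ b < 1.
- case: (ltgtP a b) => [ab | ba | ->]; [right | right | by left].
  + by split; [lra | rewrite lt_neqAle b1 hb1 // lt_eqF //; lra].
  + by split; [rewrite lt0r b0 hb0 // gt_eqF //; lra | lra].
- by exists 1 => //; apply/andP; split; lra.
(* [t = b (1 - b)] is below both [b] and [1 - b], and [|b - a| <= 1]. *)
have t_gt0 : 0 < b * (1 - b) by rewrite mulr_gt0 // subr_gt0.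
by exists (b * (1 - b)) => //; apply/andP; split; nra.
Qed.

Lemma extend_in01_antitone a b s t : 0 <= a <= 1 -> 0 <= b <= 1 -> 0 <= s <= t ->
  0 <= b + t * (b - a) <= 1 -> 0 <= b + s * (b - a) <= 1.
Proof.
by move=> /andP[? ?] /andP[? ?] /andP[? ?] /andP[? ?]; apply/andP; split; nra.
Qed.

End UnitInterval.

Lemma exists_common_witness (T : Type) (I : finType) (F : T -> Prop)
    (m : T -> T -> T) (G : I -> T -> Prop) :
  (forall x y, F x -> F y -> F (m x y)) ->
  (forall i x y, F x -> F y -> G i x \/ G i y -> G i (m x y)) ->
  (exists x, F x) -> (forall i, exists2 x, F x & G i x) ->
  exists2 x, F x & forall i, G i x.
Proof.
move=> Fm Gm [x0 Fx0] wit.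
suff [x Fx Gx] : exists2 x, F x & forall i, i \in enum I -> G i x.
  by exists x => // i; apply: Gx; rewrite mem_enum.
elim: (enum I) => [|j s [x Fx Gx]]; first by exists x0.
have [w Fw Gw] := wit j.
exists (m x w) => [|i]; first exact: Fm.
by rewrite inE => /orP[/eqP-> | /Gx Gix]; apply: Gm => //; [right | left].
Qed.

Lemma exists_common_pos (R : realDomainType) (I : finType) (P : I -> R -> Prop) :
  (forall i s t, 0 < s <= t -> P i t -> P i s) ->
  (forall i, exists2 t, 0 < t & P i t) ->
  exists2 t, 0 < t & forall i, P i t.
Proof.
move=> Pdown wit.
suff [t t_gt0 Pt] : exists2 t, 0 < t & forall i, i \in enum I -> P i t.
  by exists t => // i; apply: Pt; rewrite mem_enum.
elim: (enum I) => [|j s [t t_gt0 Pt]]; first by exists 1.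
have [u u_gt0 Pu] := wit j.
exists (Num.min t u) => [|i]; first by rewrite lt_min t_gt0.
rewrite inE => /orP[/eqP-> | /Pt Pit];
  [apply: (Pdown _ _ u) | apply: (Pdown _ _ t)] => //;
  by rewrite lt_min t_gt0 u_gt0 ge_min lexx ?orbT.
Qed.

Section CubeGeometry.
Variables (R : realFieldType) (n : nat).
Local Notation pt := 'rV[R]_n.
Implicit Types (x y v : pt) (S P F : pt -> Prop).

Definition in_unit_cube x := forall i, 0 <= x ord0 i <= 1.

Definition convex_set S :=
  forall x y t, S x -> S y -> 0 <= t <= 1 -> S ((1 - t) *: x + t *: y).

Lemma dot_comb c a b x y : dot c (a *: x + b *: y) = a * dot c x + b * dot c y.
Proof.
rewrite /dot !mulr_sumr -big_split /=; apply: eq_bigr => i _; rewrite !mxE; ring.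
Qed.

Lemma cube_cap_convex K : is_affine K -> convex_set (cube_cap K).
Proof.
move=> hK x y t [x01 Kx] [y01 Ky] t01; split; last exact: hK.
by move=> i; rewrite !mxE; apply: conv_in01.
Qed.

Lemma face_convex P F : convex_set P -> is_face P F -> convex_set F.
Proof.
move=> convP [c [d [_ hF]]] x y t /hF[Px cx] /hF[Py cy] t01; apply/hF.
by split; [apply: convP | rewrite dot_comb cx cy; ring].
Qed.

Lemma convex_point_avoiding_bounds F v :
  convex_set F -> (forall x, F x -> in_unit_cube x) -> (exists x, F x) ->
  (forall i (e : bool), v ord0 i != e%:R -> exists2 x, F x & x ord0 i != e%:R) ->
  exists2 y, F y & forall i (e : bool), v ord0 i != e%:R -> y ord0 i != e%:R.
Proof.
move=> convF F_cube [x0 Fx0] wit.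
have half01 : 0 < (2^-1 : R) < 1 by apply/andP; split; lra.
suff [y Fy Gy] : exists2 y, F y & forall ie : 'I_n * bool,
    v ord0 ie.1 != ie.2%:R -> y ord0 ie.1 != ie.2%:R.
  by exists y => // i e; apply: (Gy (i, e)).
apply: (exists_common_witness (m := fun x y => (1 - 2^-1) *: x + 2^-1 *: y)).
- by move=> x y Fx Fy; apply: convF => //; apply/andP; split; lra.
- move=> [i e] x y Fx Fy /= Gxy v_ne; rewrite !mxE; apply/eqP => mid_e.
  have [xe ye] := conv_eq_bound (F_cube x Fx i) (F_cube y Fy i) half01 mid_e.
  by case: Gxy => /(_ v_ne); rewrite ?xe ?ye eqxx.
- by exists x0.
- move=> [i e] /=; have [v_e | /wit[x Fx x_ne]] := eqVneq (v ord0 i) e%:R.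
    by exists x0 => //; rewrite v_e eqxx.
  by exists x.
Qed.

Lemma extend_beyond_in_cube v y :
  in_unit_cube v -> in_unit_cube y ->
  (forall i (e : bool), v ord0 i != e%:R -> y ord0 i != e%:R) ->
  exists2 t, 0 < t & in_unit_cube (y + t *: (y - v)).
Proof.
move=> v01 y01 yv.
suff [t t_gt0 z01] : exists2 t, 0 < t &
    forall i, 0 <= y ord0 i + t * (y ord0 i - v ord0 i) <= 1.
  by exists t => // i; rewrite !mxE.
apply: exists_common_pos.
- move=> i s t /andP[s_gt0 st]; apply: extend_in01_antitone (v01 i) (y01 i) _.
  by rewrite ltW.
- by move=> i; apply: extend_in01 (v01 i) (y01 i) (yv i).
Qed.

Lemma extension_affine v y t : y + t *: (y - v) = (1 - - t) *: y + (- t) *: v.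
Proof. by rewrite opprK scalerDl scale1r scalerBr scaleNr addrA. Qed.

End CubeGeometry.

Theorem lemma13 (R : realFieldType) (n : nat) (K : 'rV[R]_n -> Prop)
  (hK : is_affine K) (v : 'rV[R]_n) (F : 'rV[R]_n -> Prop) :
  is_vertex (cube_cap K) v -> is_facet (cube_cap K) F -> ~ F v ->
  exists i : 'I_n,
    (0 < v ord0 i /\ forall x, F x -> x ord0 i = 0) \/
    (v ord0 i < 1 /\ forall x, F x -> x ord0 i = 1).
Proof.
move=> [? [? [_ hv]]] [faceF [? [_ [[p [Fp _]] _]]]] v_notin_F.
have [c [d [c_valid hF]]] := faceF.
have [[v01 Kv] _] := (hv v).1 erefl.
have F_cube x : F x -> in_unit_cube x by move=> /hF[[]].
have cv_lt_d : dot c v < d.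
  rewrite lt_neqAle c_valid ?andbT //; apply/eqP => cv_d.
  by apply: v_notin_F; apply/hF.
apply: NNPP => no_coord.
have avoid i (e : bool) : v ord0 i != e%:R -> exists2 x, F x & x ord0 i != e%:R.
  move=> v_ne; apply: NNPP => no_x; apply: no_coord; exists i.
  have F_e x : F x -> x ord0 i = e%:R.
    by move=> Fx; apply/eqP; apply: contra_notT no_x => x_ne; exists x.
  have /andP[v0 v1] := v01 i.
  case: e {no_x} v_ne F_e => /= v_ne F_e; [right | left]; split=> //.
    by rewrite lt_neqAle v_ne.
  by rewrite lt0r v_ne.
have [y Fy y_avoid] := convex_point_avoiding_bounds
  (face_convex (cube_cap_convex hK) faceF) F_cube (ex_intro _ _ (Fp ord0)) avoid.
have [t t_gt0 z01] := extend_beyond_in_cube v01 (F_cube y Fy) y_avoid.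
have [[_ Ky] cy] := (hF y).1 Fy.
have Pz : cube_cap K (y + t *: (y - v)) by split; rewrite // extension_affine; exact: hK.
have := c_valid _ Pz; rewrite extension_affine dot_comb cy.
by nra.
Qed.
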